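(* Assume the standing assumptions in the context and in addition $r>0$. Fix $j\in\{1,2\}$ and consider the equation $$\rho v_j(x)=H(x,y_j,Dv_j(x)),\qquad x\ge\underline{x}.$$ The function $\check{\mathsf{u}}_j(x)=\frac{1}{\rho}\frac{(rx+y_j)^{1-\gamma}}{1-\gamma}$ is a viscosity subsolution of this equation on $[\underline{x},+\infty)$, and the function $$\check{\mathsf{v}}_j(x)=\Big(\frac{\rho-r}{\gamma}+r\Big)^{-\gamma}\frac{(x+y_j/r)^{1-\gamma}}{1-\gamma}$$ is a viscosity supersolution of this equation on $(\underline{x},+\infty)$.
   Context: Standing assumptions: $\rho>0$; $-\infty<r<\rho$; $0<y_1<y_2$; $\gamma>1$; $\underline{x}\le0$ with $\rho\underline{x}+y_j>0$ for $j=1,2$. Utility $u(c)=\frac{c^{1-\gamma}}{1-\gamma}$; Hamiltonian $H(x,y_j,p)=\sup_{c\ge0}\{u(c)+(rx+y_j-c)p\}$, equal to $(rx+y_j)p+\frac{\gamma}{1-\gamma}p^{1-1/\gamma}$ for $p\ge0$ and $+\infty$ for $p<0$. A u.s.c. $w$ is a viscosity subsolution on $S\subseteq[\underline{x},\infty)$ if whenever $\varphi$ smooth and $w-\varphi$ has a local max (relative to $[\underline{x},\infty)$) at $x_0\in S$, then $\rho w(x_0)\le H(x_0,y_j,D\varphi(x_0))$; an l.s.c. $w$ is a viscosity supersolution on $S$ if at local minima $x_0\in S$ of $w-\varphi$, $\rho w(x_0)\ge H(x_0,y_j,D\varphi(x_0))$. *)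

From Stdlib Require Import Reals Lra.
From Coquelicot Require Import Coquelicot.
Open Scope R_scope.

(* x^a for a > 0, with the convention 0^a = 0 (Stdlib's Rpower 0 a = 1). *)
Definition pos_pow (x a : R) : R := if Rlt_dec 0 x then Rpower x a else 0.

(* Hamiltonian H(x,y,p) = sup_{c>=0} { u(c) + (r x + y - c) p }, given in closed
   form by the standing assumptions: +oo for p < 0, and
   (r x + y) p + gamma/(1-gamma) p^(1-1/gamma) for p >= 0. *)
Definition Ham (r gamma x y p : R) : Rbar :=
  if Rlt_dec p 0 then p_infty
  else Finite ((r * x + y) * p + gamma / (1 - gamma) * pos_pow p (1 - 1 / gamma)).

Definition smooth (f : R -> R) : Prop :=
  forall (n : nat) (x : R), ex_derive (Derive_n f n) x.

Definition usc_on (xl : R) (w : R -> R) : Prop :=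
  forall x0, xl <= x0 -> forall eps, 0 < eps ->
    exists d, 0 < d /\ forall x, xl <= x -> Rabs (x - x0) < d -> w x < w x0 + eps.
Definition lsc_on (xl : R) (w : R -> R) : Prop :=
  forall x0, xl <= x0 -> forall eps, 0 < eps ->
    exists d, 0 < d /\ forall x, xl <= x -> Rabs (x - x0) < d -> w x0 - eps < w x.

Definition loc_max_rel (xl : R) (g : R -> R) (x0 : R) : Prop :=
  exists d, 0 < d /\ forall x, xl <= x -> Rabs (x - x0) < d -> g x <= g x0.
Definition loc_min_rel (xl : R) (g : R -> R) (x0 : R) : Prop :=
  exists d, 0 < d /\ forall x, xl <= x -> Rabs (x - x0) < d -> g x0 <= g x.

Definition visc_sub (rho r gamma y xl : R) (S : R -> Prop) (w : R -> R) : Prop :=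
  usc_on xl w /\
  forall (phi : R -> R) (x0 : R), smooth phi -> S x0 ->
    loc_max_rel xl (fun x => w x - phi x) x0 ->
    Rbar_le (Finite (rho * w x0)) (Ham r gamma x0 y (Derive phi x0)).

Definition visc_super (rho r gamma y xl : R) (S : R -> Prop) (w : R -> R) : Prop :=
  lsc_on xl w /\
  forall (phi : R -> R) (x0 : R), smooth phi -> S x0 ->
    loc_min_rel xl (fun x => w x - phi x) x0 ->
    Rbar_le (Ham r gamma x0 y (Derive phi x0)) (Finite (rho * w x0)).

Definition u_check (rho r gamma y : R) (x : R) : R :=
  / rho * (Rpower (r * x + y) (1 - gamma) / (1 - gamma)).

Definition v_check (rho r gamma y : R) (x : R) : R :=
  Rpower ((rho - r) / gamma + r) (- gamma) * (Rpower (x + y / r) (1 - gamma) / (1 - gamma)).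

(** The subsolution does not even need the test function: for every slope [p],
    [H(x, y, p) >= u(r x + y)], because consuming [c = r x + y] is admissible
    in the supremum defining [H], and [rho u_check(x) = u(r x + y)].  The
    supersolution is a classical solution, [H(x, y, v_check'(x)) = rho v_check(x)],
    and at an interior local minimum of [v_check - phi] the test function has
    slope [v_check'(x)]. *)

From Stdlib Require Import Reals Lra.
From Coquelicot Require Import Coquelicot.
Open Scope R_scope.

Lemma Rpower_bernoulli_nonpos t a : 0 < t -> a <= 0 -> 1 + a * (t - 1) <= Rpower t a.
Proof.
  intros Ht Ha. unfold Rpower.
  assert (Hexp := exp_ineq1_le (a * ln t)).
  assert (Hln := exp_ineq1_le (ln t)). rewrite exp_ln in Hln by lra.
  nra.
Qed.

Lemma Rpower_tangent_le k c a : 0 < k -> 0 < c -> a <= 0 ->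
  Rpower c a + a * Rpower c (a - 1) * (k - c) <= Rpower k a.
Proof.
  intros Hk Hc Ha.
  assert (Hkc : 0 < k / c) by (apply Rdiv_lt_0_compat; lra).
  assert (Hb := Rpower_bernoulli_nonpos (k / c) a Hkc Ha).
  assert (Hca : 0 < Rpower c a) by apply exp_pos.
  replace (Rpower k a) with (Rpower c a * Rpower (k / c) a)
    by (rewrite Rpower_mult_distr by lra; f_equal; field; lra).
  replace (a - 1) with (a + - (1)) by ring.
  rewrite Rpower_plus, Rpower_Ropp, Rpower_1 by lra.
  replace (Rpower c a + a * (Rpower c a * / c) * (k - c))
    with (Rpower c a * (1 + a * (k / c - 1))) by (field; lra).
  apply Rmult_le_compat_l; lra.
Qed.

Definition crra (gamma c : R) : R := Rpower c (1 - gamma) / (1 - gamma).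

Lemma crra_neg gamma c : 1 < gamma -> crra gamma c < 0.
Proof.
  intros Hg. apply Rdiv_pos_neg; [apply exp_pos | lra].
Qed.

Lemma crra_le_tangent gamma k c : 1 < gamma -> 0 < k -> 0 < c ->
  crra gamma k <= crra gamma c + Rpower c (- gamma) * (k - c).
Proof.
  intros Hg Hk Hc. unfold crra.
  assert (Ht := Rpower_tangent_le k c (1 - gamma) Hk Hc ltac:(lra)).
  replace (1 - gamma - 1) with (- gamma) in Ht by ring.
  apply (Rmult_le_reg_r (gamma - 1)); [lra|].
  replace (Rpower k (1 - gamma) / (1 - gamma) * (gamma - 1))
    with (- Rpower k (1 - gamma)) by (field; lra).
  replace ((Rpower c (1 - gamma) / (1 - gamma) + Rpower c (- gamma) * (k - c)) * (gamma - 1))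
    with (- (Rpower c (1 - gamma) + (1 - gamma) * Rpower c (- gamma) * (k - c)))
    by (field; lra).
  lra.
Qed.

Lemma is_derive_crra_comp gamma (g : R -> R) (x dg : R) : gamma <> 1 ->
  is_derive g x dg -> 0 < g x ->
  is_derive (fun t => crra gamma (g t)) x (dg * Rpower (g x) (- gamma)).
Proof.
  intros Hg1 Hg Hpos. unfold crra.
  apply (is_derive_ext (fun t => / (1 - gamma) * Rpower (g t) (1 - gamma))).
  { intros t. apply Rmult_comm. }
  replace (dg * Rpower (g x) (- gamma))
    with (/ (1 - gamma) * scal dg ((1 - gamma) * Rpower (g x) (1 - gamma - 1))).
  2:{ replace (1 - gamma - 1) with (- gamma) by ring. unfold scal; simpl.
      unfold mult; simpl. field. lra. }
  apply is_derive_scal, (is_derive_comp (fun u => Rpower u (1 - gamma)) g); [|exact Hg].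
  apply is_derive_Reals, derivable_pt_lim_power, Hpos.
Qed.

(** For [p > 0], use the tangent to [crra] at [c = p^(-1/gamma)], where its slope is [p]. *)
Lemma crra_le_Ham r gamma x y p : 1 < gamma -> 0 < r * x + y ->
  Rbar_le (crra gamma (r * x + y)) (Ham r gamma x y p).
Proof.
  intros Hg Hk. unfold Ham, pos_pow.
  destruct (Rlt_dec p 0) as [Hpneg | Hpneg]; [exact I|].
  destruct (Rlt_dec 0 p) as [Hp | Hp]; simpl.
  - set (c := Rpower p (- / gamma)).
    assert (Hc : 0 < c) by apply exp_pos.
    assert (Hslope : Rpower c (- gamma) = p).
    { unfold c. rewrite Rpower_mult.
      replace (- / gamma * - gamma) with 1 by (field; lra). apply Rpower_1, Hp. }
    assert (Hval : Rpower c (1 - gamma) = Rpower p (1 - 1 / gamma)).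
    { unfold c. rewrite Rpower_mult. f_equal. field. lra. }
    assert (Hpc : Rpower c (1 - gamma) = p * c).
    { replace (1 - gamma) with (- gamma + 1) by ring.
      rewrite Rpower_plus, Rpower_1, Hslope by exact Hc. reflexivity. }
    eapply Rle_trans; [exact (crra_le_tangent gamma (r * x + y) c Hg Hk Hc)|].
    unfold crra. rewrite <- Hval, Hpc, Hslope.
    right. field. lra.
  - replace p with 0 by lra.
    assert (Hu := crra_neg gamma (r * x + y) Hg). lra.
Qed.

Lemma continuity_pt_near f x0 eps : continuity_pt f x0 -> 0 < eps ->
  exists d, 0 < d /\ forall x, Rabs (x - x0) < d -> Rabs (f x - f x0) < eps.
Proof.
  intros Hf Heps.
  destruct (proj1 (continuity_pt_locally f x0) Hf (mkposreal eps Heps)) as [d Hd].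
  exists d. split; [apply cond_pos | exact Hd].
Qed.

Lemma continuity_usc_on xl f : (forall x, xl <= x -> continuity_pt f x) -> usc_on xl f.
Proof.
  intros Hf x0 Hx0 eps Heps.
  destruct (continuity_pt_near f x0 eps (Hf x0 Hx0) Heps) as [d [Hd Hnear]].
  exists d. split; [exact Hd|]. intros x _ Hx.
  specialize (Hnear x Hx). apply Rabs_def2 in Hnear. lra.
Qed.

Lemma continuity_lsc_on xl f : (forall x, xl <= x -> continuity_pt f x) -> lsc_on xl f.
Proof.
  intros Hf x0 Hx0 eps Heps.
  destruct (continuity_pt_near f x0 eps (Hf x0 Hx0) Heps) as [d [Hd Hnear]].
  exists d. split; [exact Hd|]. intros x _ Hx.
  specialize (Hnear x Hx). apply Rabs_def2 in Hnear. lra.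
Qed.

Lemma loc_min_rel_Derive_eq xl (f g : R -> R) (x0 l : R) : xl < x0 ->
  is_derive f x0 l -> ex_derive g x0 ->
  loc_min_rel xl (fun x => f x - g x) x0 -> Derive g x0 = l.
Proof.
  intros Hx0 Hf Hg [d [Hd Hmin]].
  assert (Hfg : derivable_pt_lim (fun x => f x - g x) x0 (l - Derive g x0)).
  { apply is_derive_Reals, (is_derive_minus f g); [exact Hf | exact (Derive_correct g x0 Hg)]. }
  assert (Hcrit := deriv_minimum _ (Rmax xl (x0 - d)) (x0 + d) x0 (exist _ _ Hfg)).
  simpl in Hcrit.
  enough (l - Derive g x0 = 0) by lra.
  apply Hcrit; [apply Rmax_lub_lt; lra | lra |].
  intros x Hlo Hhi.
  assert (Hl := Rmax_l xl (x0 - d)). assert (Hr := Rmax_r xl (x0 - d)).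
  apply Hmin; [lra | apply Rabs_def1; lra].
Qed.

Lemma visc_sub_of_le_Ham rho r gamma y xl (S : R -> Prop) (w : R -> R) :
  usc_on xl w ->
  (forall x p, S x -> Rbar_le (rho * w x) (Ham r gamma x y p)) ->
  visc_sub rho r gamma y xl S w.
Proof.
  intros Hw Hle. split; [exact Hw|].
  intros phi x0 _ Hx0 _. apply Hle, Hx0.
Qed.

Lemma visc_super_of_classical rho r gamma y xl (w w' : R -> R) :
  lsc_on xl w ->
  (forall x, xl < x -> is_derive w x (w' x)) ->
  (forall x, xl < x -> Rbar_le (Ham r gamma x y (w' x)) (rho * w x)) ->
  visc_super rho r gamma y xl (fun x => xl < x) w.
Proof.
  intros Hw Hder Hle. split; [exact Hw|].
  intros phi x0 Hphi Hx0 Hmin.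
  rewrite (loc_min_rel_Derive_eq xl w phi x0 (w' x0) Hx0 (Hder x0 Hx0) (Hphi 0%nat x0) Hmin).
  apply Hle, Hx0.
Qed.

Lemma ex_derive_u_check rho r gamma y x : gamma <> 1 -> 0 < r * x + y ->
  ex_derive (u_check rho r gamma y) x.
Proof.
  intros Hg Hk. eexists.
  apply (is_derive_scal (fun t => crra gamma (r * t + y))).
  apply (is_derive_crra_comp gamma (fun t => r * t + y) x r Hg); [|exact Hk].
  auto_derive; [exact I | ring].
Qed.

Lemma is_derive_v_check rho r gamma y x :
  0 < r -> r < rho -> 1 < gamma -> 0 < x + y / r ->
  is_derive (v_check rho r gamma y) x
    (Rpower (((rho - r) / gamma + r) * (x + y / r)) (- gamma)).
Proof.
  intros Hr Hrrho Hg Hz.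
  assert (HB : 0 < (rho - r) / gamma + r)
    by (assert (0 < (rho - r) / gamma) by (apply Rdiv_lt_0_compat; lra); lra).
  rewrite <- Rpower_mult_distr by assumption.
  apply (is_derive_scal (fun t => crra gamma (t + y / r))).
  replace (Rpower (x + y / r) (- gamma)) with (1 * Rpower (x + y / r) (- gamma)) by ring.
  apply (is_derive_crra_comp gamma (fun t => t + y / r)); [lra | | exact Hz].
  auto_derive; [exact I | ring].
Qed.

(** [B = (rho - r) / gamma + r] is the root of [r (1 - gamma) + gamma B = rho],
    which is exactly what makes [v_check] a classical solution. *)
Lemma Ham_v_check rho r gamma y x :
  0 < r -> r < rho -> 1 < gamma -> 0 < x + y / r ->
  Ham r gamma x y (Rpower (((rho - r) / gamma + r) * (x + y / r)) (- gamma))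
  = Finite (rho * v_check rho r gamma y x).
Proof.
  intros Hr Hrrho Hg Hz.
  set (B := (rho - r) / gamma + r).
  assert (HB : 0 < B)
    by (assert (0 < (rho - r) / gamma) by (apply Rdiv_lt_0_compat; lra); unfold B; lra).
  set (z := x + y / r).
  set (P := Rpower (B * z) (- gamma)).
  assert (HP : 0 < P) by apply exp_pos.
  assert (HPpow : Rpower P (1 - 1 / gamma) = P * (B * z)).
  { unfold P. rewrite Rpower_mult.
    replace (- gamma * (1 - 1 / gamma)) with (- gamma + 1) by (field; lra).
    rewrite Rpower_plus, Rpower_1 by (apply Rmult_lt_0_compat; assumption). reflexivity. }
  assert (Hv : v_check rho r gamma y x = P * z / (1 - gamma)).
  { unfold v_check. fold B z.
    replace (1 - gamma) with (- gamma + 1) by ring.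
    rewrite Rpower_plus, Rpower_1 by exact Hz.
    unfold P. rewrite <- Rpower_mult_distr by assumption.
    field. lra. }
  unfold Ham, pos_pow.
  destruct (Rlt_dec P 0); [lra|]. destruct (Rlt_dec 0 P); [|lra].
  rewrite HPpow, Hv.
  replace (r * x + y) with (r * z) by (unfold z; field; lra).
  f_equal. unfold B. field. lra.
Qed.

Theorem mainTheorem7 (rho r y1 y2 gamma xl : R) (j : nat)
  (Hrho : 0 < rho) (Hrrho : r < rho) (Hr : 0 < r)
  (Hy1 : 0 < y1) (Hy12 : y1 < y2) (Hgamma : 1 < gamma)
  (Hxl : xl <= 0) (Hxl1 : rho * xl + y1 > 0) (Hxl2 : rho * xl + y2 > 0)
  (Hj : j = 1%nat \/ j = 2%nat) :
  let yj := if Nat.eqb j 1 then y1 else y2 in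
  visc_sub rho r gamma yj xl (fun x => xl <= x) (u_check rho r gamma yj) /\
  visc_super rho r gamma yj xl (fun x => xl < x) (v_check rho r gamma yj).
Proof.
  intros yj.
  assert (Hyj : rho * xl + yj > 0) by (unfold yj; destruct (Nat.eqb j 1); lra).
  assert (Hk : forall x, xl <= x -> 0 < r * x + yj) by (intros; nra).
  assert (Hz : forall x, xl <= x -> 0 < x + yj / r).
  { intros x Hx. replace (x + yj / r) with ((r * x + yj) / r) by (field; lra).
    apply Rdiv_lt_0_compat; [apply Hk, Hx | exact Hr]. }
  split.
  - apply visc_sub_of_le_Ham.
    + apply continuity_usc_on. intros x Hx.
      apply derivable_continuous_pt, ex_derive_Reals_0, ex_derive_u_check; [lra | apply Hk, Hx].
    + intros x p Hx. unfold u_check.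
      replace (rho * (/ rho * _)) with (crra gamma (r * x + yj)) by (unfold crra; field; lra).
      apply crra_le_Ham; [exact Hgamma | apply Hk, Hx].
  - apply (visc_super_of_classical _ _ _ _ _ _
      (fun x => Rpower (((rho - r) / gamma + r) * (x + yj / r)) (- gamma))).
    + apply continuity_lsc_on. intros x Hx.
      apply derivable_continuous_pt, ex_derive_Reals_0. eexists.
      apply is_derive_v_check; auto.
    + intros x Hx. apply is_derive_v_check; auto; apply Hz; lra.
    + intros x Hx. rewrite Ham_v_check by (auto; apply Hz; lra). apply Rbar_le_refl.
Qed.
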